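(* Let $g:\mathbb{R}^N\to\mathbb{R}\cup\{+\infty\}$ be proper and lower semi-continuous, let $f:\mathbb{R}^N\to\mathbb{R}$ be continuously differentiable such that, for some $\mathbf{L}\in\mathbb{S}_{++}(N)$, the gradient of $f\circ\mathbf{L}^{-1/2}$ is $1$-Lipschitz continuous, and assume $f^g:=f+g$ is bounded from below. Fix $a>0$, $x_0\in\mathbb{R}^N$, and a sequence of matrices $\mathbf{D}_k\in\mathbb{R}^{N\times R}$. For $k\ge0$ and $\boldsymbol\beta\in\mathbb{R}^R$ let $y^{(\boldsymbol\beta)}_k:=x_k+\mathbf{D}_k\boldsymbol\beta$ and $\ell(x;y):=g(x)+f(y)+\langle\nabla f(y),x-y\rangle$. Suppose the sequences $(x_k)_{k}$, $(\boldsymbol\beta_k)_k$, and symmetric matrices $(\mathbf{L}_k)_k$, $(\mathbf{T}_k)_k$ satisfy for all $k\ge0$: $$(x_{k+1},\boldsymbol\beta_k)\in\operatorname*{argmin}_{x\in\mathbb{R}^N}\min_{\boldsymbol\beta\in\mathbb{R}^R}\ \ell(x;y_k^{(\boldsymbol\beta)})+\tfrac12\|x-y_k^{(\boldsymbol\beta)}\|_{\mathbf{T}_k}^2,$$ $\mathbf{T}_k-\mathbf{L}_k-a\mathbf{I}\in\mathbb{S}_+(N)$, and $$f(x_{k+1})\le f(y_k^{(\boldsymbol\beta_k)})+\langle\nabla f(y_k^{(\boldsymbol\beta_k)}),x_{k+1}-y_k^{(\boldsymbol\beta_k)}\rangle+\tfrac12\|x_{k+1}-y_k^{(\boldsymbol\beta_k)}\|_{\mathbf{L}_k}^2.$$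 Suppose $(\mathbf{T}_k)_{k\in\mathbb{N}}$ is bounded. Then the sequence $(f^g(x_k))_{k\in\mathbb{N}}$ is non-increasing and every limit point of $(x_{k+1})_{k\in\mathbb{N}}$ is a stationary point of $f^g$.
   Context: $\mathbb{S}_{+}(N)$ (resp. $\mathbb{S}_{++}(N)$) denotes the set of symmetric positive semi-definite (resp. positive definite) $N\times N$ real matrices; $\mathbf{I}$ is the identity; $\|x\|_{\mathbf{V}}^2:=\langle x,\mathbf{V}x\rangle$. The Fréchet subdifferential $\hat\partial h(\bar x)$ of $h:\mathbb{R}^N\to\mathbb{R}\cup\{+\infty\}$ at $\bar x\in\operatorname{dom}h$ is the set of $v$ with $\liminf_{x\to\bar x,x\ne\bar x}\frac{h(x)-h(\bar x)-\langle v,x-\bar x\rangle}{\|x-\bar x\|}\ge0$; the limiting subdifferential $\partial h(\bar x)$ is the set of $v$ for which there exist $x_k\to\bar x$ with $h(x_k)\to h(\bar x)$ and $v_k\in\hat\partial h(x_k)$ with $v_k\to v$ (both empty outside $\operatorname{dom}h$). A stationary point of $h$ is a point $\bar x\in\operatorname{dom} h$ with $0\in\partial h(\bar x)$. *)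

From HB Require Import structures.
From mathcomp Require Import all_boot all_order all_algebra.
From mathcomp Require Import reals constructive_ereal.
Set Implicit Arguments. Unset Strict Implicit. Unset Printing Implicit Defensive.
Import Order.TTheory GRing.Theory Num.Theory.
Local Open Scope ring_scope.

Section Defs.
Context {R : realType} {N : nat}.

Definition dotp (x y : 'cV[R]_N) : R := (x^T *m y) 0 0.
Definition enorm (x : 'cV[R]_N) : R := Num.sqrt (dotp x x).
(* ||x||_V^2 := <x, V x> *)
Definition qnorm (V : 'M[R]_N) (x : 'cV[R]_N) : R := dotp x (V *m x).

Definition sym_mx (A : 'M[R]_N) : Prop := A^T = A.
Definition psd (A : 'M[R]_N) : Prop := sym_mx A /\ forall x, 0 <= qnorm A x.
Definition pd (A : 'M[R]_N) : Prop :=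
  sym_mx A /\ forall x : 'cV[R]_N, x != 0 -> 0 < qnorm A x.

Definition is_gradient (f : 'cV[R]_N -> R) (gf : 'cV[R]_N -> 'cV[R]_N) : Prop :=
  forall x (eps : R), 0 < eps -> exists2 delta : R, 0 < delta &
    forall y, enorm (y - x) < delta ->
      `|f y - f x - dotp (gf x) (y - x)| <= eps * enorm (y - x).

Definition vcontinuous (F : 'cV[R]_N -> 'cV[R]_N) : Prop :=
  forall x (eps : R), 0 < eps -> exists2 delta : R, 0 < delta &
    forall y, enorm (y - x) < delta -> enorm (F y - F x) < eps.

Definition seq_cvg (u : nat -> 'cV[R]_N) (l : 'cV[R]_N) : Prop :=
  forall eps : R, 0 < eps -> exists n, forall k, (n <= k)%N -> enorm (u k - l) < eps.

Definition limit_point (u : nat -> 'cV[R]_N) (l : 'cV[R]_N) : Prop :=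
  exists phi : nat -> nat, (forall n, (phi n < phi n.+1)%N) /\
    seq_cvg (fun n => u (phi n)) l.

Definition proper_fun (g : 'cV[R]_N -> \bar R) : Prop :=
  (forall x, g x != -oo%E) /\ exists x, g x \is a fin_num.

Definition lsc (g : 'cV[R]_N -> \bar R) : Prop :=
  forall x (t : R), (t%:E < g x)%E -> exists2 delta : R, 0 < delta &
    forall y, enorm (y - x) < delta -> (t%:E < g y)%E.

(* Frechet subdifferential: v \in \hat\partial h(xbar) (liminf >= 0 unfolded) *)
Definition frechet_subdiff (h : 'cV[R]_N -> \bar R) (xbar v : 'cV[R]_N) : Prop :=
  h xbar \is a fin_num /\
  forall eps : R, 0 < eps -> exists2 delta : R, 0 < delta &
    forall x, 0 < enorm (x - xbar) < delta ->
      (h xbar + (dotp v (x - xbar) - eps * enorm (x - xbar))%:E <= h x)%E.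

Definition limiting_subdiff (h : 'cV[R]_N -> \bar R) (xbar v : 'cV[R]_N) : Prop :=
  h xbar \is a fin_num /\
  exists (xs vs : nat -> 'cV[R]_N),
    [/\ seq_cvg xs xbar,
        (forall eps : R, 0 < eps -> exists n, forall k, (n <= k)%N ->
            h (xs k) \is a fin_num /\ `|fine (h (xs k)) - fine (h xbar)| < eps),
        (forall k, frechet_subdiff h (xs k) (vs k)) &
        seq_cvg vs v].

Definition stationary (h : 'cV[R]_N -> \bar R) (xbar : 'cV[R]_N) : Prop :=
  h xbar \is a fin_num /\ limiting_subdiff h xbar 0.

End Defs.

(* Comparing the optimal value of the model with its value at (x_k, 0), and
   using T_k - L_k >= a I together with the descent inequality, gives
   F(x_{k+1}) + a/2 |d_k|^2 <= F(x_k) for F = f + g, where d_k = x_{k+1} - z_k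
   and z_k = x_k + D_k beta_k.  Hence F(x_k) decreases and, F being bounded
   below, d_k -> 0.  Minimality in x alone makes
   v_k = grad f(x_{k+1}) - grad f(z_k) - T_k d_k
   a Frechet subgradient of F at x_{k+1}: the quadratic term of the model is
   o(|y - x_{k+1}|) because the T_k are bounded.  Along a subsequence
   x_{k+1} -> xbar we get z_k -> xbar, hence v_k -> 0 by continuity of grad f;
   comparing the model at x_{k+1} and at xbar bounds g(x_{k+1}) - g(xbar) above
   by a vanishing quantity, and lower semicontinuity bounds it below, so
   F(x_{k+1}) -> F(xbar) and 0 is a limiting subgradient at xbar. *)

From HB Require Import structures.
From mathcomp Require Import all_boot all_order all_algebra.
From mathcomp Require Import classical_sets reals constructive_ereal ring lra.
Import Order.TTheory GRing.Theory Num.Theory.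
Local Open Scope ring_scope.

Section DotProduct.
Context {R : realType} {N : nat}.
Implicit Types (u v w : 'cV[R]_N) (T : 'M[R]_N).

Lemma dotpE u v : dotp u v = \sum_i u i 0 * v i 0.
Proof. by rewrite /dotp !mxE; apply: eq_bigr => i _; rewrite mxE. Qed.

Lemma dotpC u v : dotp u v = dotp v u.
Proof. by rewrite !dotpE; apply: eq_bigr => i _; rewrite mulrC. Qed.

Lemma dotpDr u v w : dotp w (u + v) = dotp w u + dotp w v.
Proof. by rewrite !dotpE -big_split; apply: eq_bigr => i _; rewrite !mxE mulrDr. Qed.

Lemma dotpDl u v w : dotp (u + v) w = dotp u w + dotp v w.
Proof. by rewrite dotpC dotpDr !(dotpC w). Qed.

Lemma dotpNr u w : dotp w (- u) = - dotp w u.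
Proof. by rewrite !dotpE -sumrN; apply: eq_bigr => i _; rewrite !mxE mulrN. Qed.

Lemma dotpNl u w : dotp (- u) w = - dotp u w.
Proof. by rewrite dotpC dotpNr dotpC. Qed.

Lemma dotpZr (c : R) u w : dotp w (c *: u) = c * dotp w u.
Proof. by rewrite !dotpE mulr_sumr; apply: eq_bigr => i _; rewrite !mxE mulrCA. Qed.

Lemma dotp0r w : dotp w 0 = 0.
Proof. by rewrite -(scale0r 0) dotpZr mul0r. Qed.

Lemma dotpp_ge0 u : 0 <= dotp u u.
Proof. by rewrite dotpE; apply: sumr_ge0 => i _; rewrite -expr2 sqr_ge0. Qed.

Lemma dotp_mulmx T u v : dotp u (T *m v) = dotp (T^T *m u) v.
Proof. by rewrite /dotp trmx_mul trmxK mulmxA. Qed.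

Lemma qnorm0 T : qnorm T 0 = 0.
Proof. by rewrite /qnorm mulmx0 dotp0r. Qed.

Lemma qnormB (A B : 'M[R]_N) u : qnorm (A - B) u = qnorm A u - qnorm B u.
Proof. by rewrite /qnorm mulmxBl dotpDr dotpNr. Qed.

Lemma qnorm_scalar (c : R) u : qnorm c%:M u = c * dotp u u.
Proof. by rewrite /qnorm mul_scalar_mx dotpZr. Qed.

Lemma qnormD T u v : sym_mx T ->
  qnorm T (u + v) = qnorm T u + qnorm T v + 2 * dotp (T *m v) u.
Proof.
move=> symT; rewrite /qnorm mulmxDr !dotpDl !dotpDr.
by rewrite [dotp v (T *m u)]dotp_mulmx symT [dotp u (T *m v)]dotpC; ring.
Qed.

End DotProduct.

Section Norm1.
Context {R : realType} {N : nat}.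
Implicit Types (u v : 'cV[R]_N) (T : 'M[R]_N).

(* The l1 norm is trivially subadditive and satisfies
   enorm <= norm1 <= N * enorm, so convergence can be checked with it. *)
Definition norm1 u : R := \sum_i `|u i 0|.

Lemma norm1_ge0 u : 0 <= norm1 u.
Proof. exact: sumr_ge0. Qed.

Lemma norm1D u v : norm1 (u + v) <= norm1 u + norm1 v.
Proof.
rewrite /norm1 -big_split; apply: ler_sum => i _; rewrite mxE; exact: ler_normD.
Qed.

Lemma norm1N u : norm1 (- u) = norm1 u.
Proof. by apply: eq_bigr => i _; rewrite mxE normrN. Qed.

Lemma norm1B u v : norm1 (u - v) <= norm1 u + norm1 v.
Proof. by rewrite -(norm1N v) norm1D. Qed.

Lemma enorm_ge0 u : 0 <= enorm u.
Proof. exact: sqrtr_ge0. Qed.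

Lemma norm_coord_le_norm1 u i : `|u i 0| <= norm1 u.
Proof. by rewrite /norm1 (bigD1 i) //= lerDl sumr_ge0. Qed.

Lemma enorm_le_norm1 u : enorm u <= norm1 u.
Proof.
rewrite /enorm -(ger0_norm (norm1_ge0 u)) -sqrtr_sqr ler_sqrt ?sqr_ge0 //.
rewrite dotpE expr2 mulr_suml; apply: ler_sum => i _.
apply: le_trans (ler_norm _) _; rewrite normrM.
exact: ler_wpM2l (norm_coord_le_norm1 _ _).
Qed.

Lemma norm_coord_le_enorm u i : `|u i 0| <= enorm u.
Proof.
rewrite /enorm -sqrtr_sqr ler_sqrt ?dotpp_ge0 // dotpE (bigD1 i) //= -expr2 lerDl.
by apply: sumr_ge0 => j _; rewrite -expr2 sqr_ge0.
Qed.

Lemma norm1_le_enorm u : norm1 u <= N%:R * enorm u.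
Proof.
have -> : N%:R * enorm u = \sum_(i < N) enorm u.
  by rewrite sumr_const card_ord mulr_natl.
by apply: ler_sum => i _; apply: norm_coord_le_enorm.
Qed.

Lemma dotp_le_norm1 u v : `|dotp u v| <= norm1 u * norm1 v.
Proof.
rewrite dotpE /norm1 mulr_suml; apply: le_trans (ler_norm_sum _ _ _) _.
by apply: ler_sum => i _; rewrite normrM ler_wpM2l ?norm_coord_le_norm1.
Qed.

Lemma norm1_mulmx_le {T} {C : R} u : (forall i j, `|T i j| <= C) ->
  norm1 (T *m u) <= C * N%:R * norm1 u.
Proof.
move=> T_le; have -> : C * N%:R * norm1 u = \sum_(i < N) \sum_j C * `|u j 0|.
  by rewrite sumr_const card_ord -mulr_sumr /norm1 -mulr_natr; ring.
rewrite /norm1; apply: ler_sum => i _; rewrite mxE.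
apply: le_trans (ler_norm_sum _ _ _) _.
by apply: ler_sum => j _; rewrite normrM ler_wpM2r.
Qed.

Lemma qnorm_le_norm1 {T} {C : R} u : (forall i j, `|T i j| <= C) ->
  `|qnorm T u| <= C * N%:R * norm1 u ^+ 2.
Proof.
move=> T_le; apply: le_trans (dotp_le_norm1 _ _) _.
by rewrite expr2 mulrCA ler_wpM2l ?norm1_ge0 ?norm1_mulmx_le.
Qed.

Lemma qnorm_le_enorm {T} {C : R} u : (forall i j, `|T i j| <= C) -> 0 <= C ->
  `|qnorm T u| <= C * N%:R ^+ 3 * enorm u ^+ 2.
Proof.
move=> T_le C_ge0; apply: le_trans (qnorm_le_norm1 u T_le) _.
have -> : C * N%:R ^+ 3 * enorm u ^+ 2 = C * N%:R * (N%:R * enorm u) ^+ 2 by ring.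
apply: ler_wpM2l; first exact: mulr_ge0.
by rewrite !expr2 ler_pM ?norm1_ge0 ?norm1_le_enorm.
Qed.

End Norm1.

Section NullSeq.
Context {R : realType}.
Implicit Types u v w : nat -> R.

Definition null_seq u := forall e : R, 0 < e ->
  exists n, forall k, (n <= k)%N -> `|u k| < e.

Lemma null_seq_le {u v} : null_seq u -> (forall k, `|v k| <= u k) -> null_seq v.
Proof.
move=> u0 vu e e0; have [n un] := u0 e e0; exists n => k kn.
exact: le_lt_trans (vu k) (le_lt_trans (ler_norm _) (un k kn)).
Qed.

Lemma null_seqD {u v} : null_seq u -> null_seq v -> null_seq (fun k => u k + v k).
Proof.
move=> u0 v0 e e0; have e2 : 0 < e / 2 by lra.
have [n1 un] := u0 _ e2; have [n2 vn] := v0 _ e2.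
exists (maxn n1 n2) => k; rewrite geq_max => /andP[kn1 kn2].
apply: le_lt_trans (ler_normD _ _) _; have := un k kn1; have := vn k kn2; lra.
Qed.

Lemma null_seqMl (c : R) {u} : null_seq u -> null_seq (fun k => c * u k).
Proof.
move=> u0 e e0; have c1 : 0 < `|c| + 1 by rewrite ltr_pwDr.
have [n un] := u0 (e / (`|c| + 1)) (divr_gt0 e0 c1); exists n => k kn.
move: (un k kn); rewrite normrM ltr_pdivlMr // => uk.
have := normr_ge0 (u k); have := normr_ge0 c; nra.
Qed.

Lemma null_seqM {u v} : null_seq u -> null_seq v -> null_seq (fun k => u k * v k).
Proof.
move=> u0 v0 e e0; have [n1 un] := u0 1 ltr01; have [n2 vn] := v0 e e0.
exists (maxn n1 n2) => k; rewrite geq_max => /andP[kn1 kn2]; rewrite normrM.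
have := un k kn1; have := vn k kn2; have := normr_ge0 (u k); have := normr_ge0 (v k).
nra.
Qed.

Lemma null_seq_subseq (phi : nat -> nat) {u} : (forall n, (n <= phi n)%N) ->
  null_seq u -> null_seq (fun n => u (phi n)).
Proof.
move=> phi_ge u0 e e0; have [n un] := u0 e e0.
by exists n => k kn; apply: un (leq_trans kn (phi_ge k)).
Qed.

Lemma null_seq_sqrt {u} : null_seq u -> null_seq (fun k => Num.sqrt (u k)).
Proof.
move=> u0 e e0; have [n un] := u0 (e ^+ 2) (exprn_gt0 2 e0); exists n => k kn.
rewrite ger0_norm ?sqrtr_ge0 // -(gtr0_norm e0) -sqrtr_sqr.
by rewrite ltr_sqrt ?exprn_gt0 //; apply: le_lt_trans (ler_norm _) (un k kn).
Qed.

Lemma null_seq_shift {u} : null_seq (fun k => u k.+1) -> null_seq u.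
Proof.
move=> u0 e e0; have [n un] := u0 e e0.
by exists n.+1 => -[|k] // kn; apply: un.
Qed.

Lemma null_seq_squeeze {w u} :
  (forall e, 0 < e -> exists n, forall k, (n <= k)%N -> - e < w k) ->
  (forall k, w k <= u k) -> null_seq u -> null_seq w.
Proof.
move=> w_lb wu u0 e e0; have [n1 wn] := w_lb e e0; have [n2 un] := u0 e e0.
exists (maxn n1 n2) => k; rewrite geq_max => /andP[kn1 kn2].
have := wn k kn1; have := un k kn2; have := wu k.
rewrite !ltr_norml => ? /andP[? ?] ?; lra.
Qed.

Lemma nonincreasing_decrement_null {u} {m : R} :
  (forall k, u k.+1 <= u k) -> (forall k, m <= u k) ->
  null_seq (fun k => u k - u k.+1).
Proof.
move=> u_noninc u_ge e e0.
have u_lb : has_lbound (range u) by exists m => _ [k _ <-].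
have u_inf : has_inf (range u) by split => //; exists (u 0%N), 0%N.
have [_ [n _ <-] un] := inf_adherent e0 u_inf.
exists n => k nk; rewrite ger0_norm ?subr_ge0 //.
have := Order.NatMonotonyTheory.nonincnP u_noninc k n nk.
have := ge_inf u_lb (imageT u k.+1); lra.
Qed.

End NullSeq.

Section VectorSeq.
Context {R : realType} {N : nat}.
Implicit Types (u v : nat -> 'cV[R]_N) (l m : 'cV[R]_N).

Lemma seq_cvgE u l : seq_cvg u l <-> null_seq (fun k => enorm (u k - l)).
Proof. by split=> ul e /ul[n un]; exists n => k /un; rewrite ger0_norm ?enorm_ge0. Qed.

Lemma seq_cvg_norm1 u l : seq_cvg u l <-> null_seq (fun k => norm1 (u k - l)).
Proof.
rewrite seq_cvgE; split=> ul.
  apply: null_seq_le (null_seqMl N%:R ul) _ => k.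
  by rewrite ger0_norm ?norm1_ge0 ?norm1_le_enorm.
by apply: null_seq_le ul _ => k; rewrite ger0_norm ?enorm_ge0 ?enorm_le_norm1.
Qed.

Lemma eq_seq_cvg u v l : u =1 v -> seq_cvg u l -> seq_cvg v l.
Proof. by move=> uv ul e /ul[n un]; exists n => k; rewrite -uv; apply: un. Qed.

Lemma seq_cvg_cst l : seq_cvg (fun=> l) l.
Proof. by move=> e e0; exists 0%N => k _; rewrite subrr /enorm dotp0r sqrtr0. Qed.

Lemma seq_cvgD {u v l m} : seq_cvg u l -> seq_cvg v m ->
  seq_cvg (fun k => u k + v k) (l + m).
Proof.
rewrite !seq_cvg_norm1 => ul vm; apply: null_seq_le (null_seqD ul vm) _ => k.
by rewrite ger0_norm ?norm1_ge0 // opprD addrACA norm1D.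
Qed.

Lemma seq_cvgB {u v l m} : seq_cvg u l -> seq_cvg v m ->
  seq_cvg (fun k => u k - v k) (l - m).
Proof.
rewrite !seq_cvg_norm1 => ul vm; apply: null_seq_le (null_seqD ul vm) _ => k.
have -> : u k - v k - (l - m) = (u k - l) - (v k - m).
  by rewrite !opprB addrACA [RHS]addrACA [- l + _]addrC.
by rewrite ger0_norm ?norm1_ge0 // norm1B.
Qed.

Lemma seq_cvg_subseq (phi : nat -> nat) {u l} : (forall n, (n <= phi n)%N) ->
  seq_cvg u l -> seq_cvg (fun n => u (phi n)) l.
Proof. by rewrite !seq_cvgE; apply: null_seq_subseq. Qed.

Lemma seq_cvg_mulmx0 {T : nat -> 'M[R]_N} {C : R} {u} :
  (forall k i j, `|T k i j| <= C) -> seq_cvg u 0 ->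
  seq_cvg (fun k => T k *m u k) 0.
Proof.
rewrite !seq_cvg_norm1 => T_le u0; apply: null_seq_le (null_seqMl (C * N%:R) u0) _.
by move=> k; rewrite !subr0 ger0_norm ?norm1_ge0 ?norm1_mulmx_le.
Qed.

Lemma dotp_null {u v l} : seq_cvg u l -> seq_cvg v 0 ->
  null_seq (fun k => dotp (u k) (v k)).
Proof.
rewrite !seq_cvg_norm1 => ul v0.
apply: null_seq_le (null_seqD (null_seqMl (norm1 l) v0) (null_seqM ul v0)) _ => k.
apply: le_trans (dotp_le_norm1 _ _) _; rewrite subr0 -mulrDl ler_wpM2r ?norm1_ge0 //.
by rewrite addrC -{1}(subrK l (u k)) norm1D.
Qed.

Lemma qnorm_null {T : nat -> 'M[R]_N} {C : R} {u} :
  (forall k i j, `|T k i j| <= C) -> seq_cvg u 0 ->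
  null_seq (fun k => qnorm (T k) (u k)).
Proof. by move=> T_le u0; apply: dotp_null u0 (seq_cvg_mulmx0 T_le u0). Qed.

Lemma vcontinuous_seq_cvg {F : 'cV[R]_N -> 'cV[R]_N} {u l} :
  vcontinuous F -> seq_cvg u l -> seq_cvg (fun k => F (u k)) (F l).
Proof.
move=> Fcont ul e /(Fcont l)[d d0 Fd]; have [n un] := ul d d0.
by exists n => k /un /Fd.
Qed.

Lemma is_gradient_continuous {f : 'cV[R]_N -> R} {gf} x {e : R} :
  is_gradient f gf -> 0 < e ->
  exists2 d : R, 0 < d & forall y, enorm (y - x) < d -> `|f y - f x| < e.
Proof.
move=> fgrad e0; have [d1 d1_gt0 fd1] := fgrad x 1 ltr01.
pose K := 1 + norm1 (gf x) * N%:R.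
have K_gt0 : 0 < K by rewrite ltr_pwDl ?mulr_ge0 ?norm1_ge0.
exists (Num.min d1 (e / K)); first by rewrite lt_min d1_gt0 divr_gt0.
move=> y; rewrite lt_min ltr_pdivlMr // => /andP[yd1 yeK].
have f_lip : `|f y - f x| <= K * enorm (y - x).
  rewrite -[f y - f x](subrK (dotp (gf x) (y - x))) mulrDl mul1r.
  apply: le_trans (ler_normD _ _) (lerD _ _); first by rewrite -[X in _ <= X]mul1r fd1.
  apply: le_trans (dotp_le_norm1 _ _) _.
  by rewrite -mulrA ler_wpM2l ?norm1_ge0 ?norm1_le_enorm.
by apply: le_lt_trans f_lip _; rewrite mulrC.
Qed.

Lemma is_gradient_seq_cvg {f : 'cV[R]_N -> R} {gf u l} :
  is_gradient f gf -> seq_cvg u l -> null_seq (fun k => f (u k) - f l).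
Proof.
move=> fgrad ul e /(is_gradient_continuous l fgrad)[d d0 fd].
by have [n un] := ul d d0; exists n => k /un /fd.
Qed.

End VectorSeq.

Lemma increasing_ge_id (phi : nat -> nat) :
  (forall n, (phi n < phi n.+1)%N) -> forall n, (n <= phi n)%N.
Proof. by move=> phi_incr; elim=> // n IHn; apply: leq_ltn_trans IHn (phi_incr n). Qed.

Definition prox_model {R : realType} {N : nat} (f : 'cV[R]_N -> R)
    (gf : 'cV[R]_N -> 'cV[R]_N) (g : 'cV[R]_N -> \bar R) (T : 'M[R]_N)
    (z y : 'cV[R]_N) : \bar R :=
  (g y + (f z + dotp (gf z) (y - z) + 2^-1 * qnorm T (y - z))%:E)%E.

Lemma prox_model_center {R : realType} {N : nat} f gf g (T : 'M[R]_N) y :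
  prox_model f gf g T y y = (g y + (f y)%:E)%E.
Proof. by rewrite /prox_model subrr dotp0r qnorm0 mulr0 !addr0. Qed.

Section ProxGradient.
Context {R : realType} {N : nat}.
Context {f : 'cV[R]_N -> R} {gf : 'cV[R]_N -> 'cV[R]_N} {g : 'cV[R]_N -> \bar R}.
Context {x z : nat -> 'cV[R]_N} {Tk Lk : nat -> 'M[R]_N} {a C m : R}.

Hypothesis g_proper : proper_fun g.
Hypothesis g_lsc : lsc g.
Hypothesis f_grad : is_gradient f gf.
Hypothesis gf_cont : vcontinuous gf.
Hypothesis F_ge : forall y, (m%:E <= (f y)%:E + g y)%E.
Hypothesis a_gt0 : 0 < a.
Hypothesis Tk_sym : forall k, sym_mx (Tk k).
Hypothesis Tk_bounded : forall k i j, `|Tk k i j| <= C.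
Hypothesis C_ge0 : 0 <= C.
Hypothesis x_min : forall k y,
  (prox_model f gf g (Tk k) (z k) (x k.+1) <= prox_model f gf g (Tk k) (z k) y)%E.
Hypothesis x_le_center : forall k,
  (prox_model f gf g (Tk k) (z k) (x k.+1) <= prox_model f gf g (Tk k) (x k) (x k))%E.
Hypothesis Tk_Lk_psd : forall k, psd (Tk k - Lk k - a%:M).
Hypothesis f_descent : forall k, f (x k.+1) <=
  f (z k) + dotp (gf (z k)) (x k.+1 - z k) + 2^-1 * qnorm (Lk k) (x k.+1 - z k).

Let F y := ((f y)%:E + g y)%E.
Let d k := x k.+1 - z k.
Let w k := gf (z k) + Tk k *m d k.
Let Fx k := f (x k.+1) + fine (g (x k.+1)).

Lemma g_iterate_fin k : g (x k.+1) \is a fin_num.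
Proof.
have [y gy] := g_proper.2; have := x_min k y.
rewrite /prox_model -(fineK gy) -EFinD fin_numE g_proper.1 /=.
by apply: contraTN => /eqP ->.
Qed.

Lemma F_iterateE k : F (x k.+1) = (Fx k)%:E.
Proof. by rewrite /F /Fx EFinD fineK ?g_iterate_fin. Qed.

Lemma sufficient_decrease k :
  ((f (x k.+1) + a / 2 * dotp (d k) (d k))%:E + g (x k.+1) <= F (x k))%E.
Proof.
have model_ge : f (x k.+1) + a / 2 * dotp (d k) (d k) <=
    f (z k) + dotp (gf (z k)) (d k) + 2^-1 * qnorm (Tk k) (d k).
  have := f_descent k; have := (Tk_Lk_psd k).2 (d k).
  by rewrite !qnormB qnorm_scalar /d; lra.
rewrite /F addeC [X in (_ <= X)%E]addeC -(prox_model_center f gf g (Tk k)).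
by apply: le_trans (x_le_center k); rewrite leeD2l // lee_fin.
Qed.

Lemma F_nonincreasing k : (F (x k.+1) <= F (x k))%E.
Proof.
apply: le_trans (sufficient_decrease k); rewrite /F leeD2r // lee_fin lerDl.
by rewrite mulr_ge0 ?dotpp_ge0 ?divr_ge0 ?ltW.
Qed.

Lemma Fx_decrease k : Fx k.+1 + a / 2 * dotp (d k.+1) (d k.+1) <= Fx k.
Proof.
have := sufficient_decrease k.+1.
by rewrite F_iterateE -(fineK (g_iterate_fin k.+1)) -EFinD lee_fin /Fx; lra.
Qed.

Lemma Fx_nonincreasing {n k} : (n <= k)%N -> Fx k <= Fx n.
Proof.
apply: Order.NatMonotonyTheory.nonincnP => {}k.
have := Fx_decrease k; have := dotpp_ge0 (d k.+1); have := a_gt0; nra.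
Qed.

Lemma step_cvg0 : seq_cvg d 0.
Proof.
have Fx_ge k : m <= Fx k by have := F_ge (x k.+1); rewrite -/(F _) F_iterateE lee_fin.
have dec_null :=
  nonincreasing_decrement_null (fun k => Fx_nonincreasing (leqnSn k)) Fx_ge.
apply/seq_cvgE; apply: null_seq_sqrt; apply: null_seq_shift.
apply: null_seq_le (null_seqMl (2 / a) dec_null) _ => k.
rewrite subr0 ger0_norm ?dotpp_ge0 // mulrAC ler_pdivlMr //.
by have := Fx_decrease k; nra.
Qed.

Lemma g_model_bound k y : g y \is a fin_num ->
  fine (g (x k.+1)) <=
    fine (g y) + dotp (w k) (y - x k.+1) + 2^-1 * qnorm (Tk k) (y - x k.+1).
Proof.
move=> gy; have := x_min k y; rewrite /prox_model.
rewrite -[g y](fineK gy) -[g (x k.+1)](fineK (g_iterate_fin k)) -!EFinD lee_fin /=.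
have -> : y - z k = (y - x k.+1) + d k by rewrite addrA subrK.
by rewrite [qnorm _ (_ + d k)]qnormD // [dotp _ (_ + d k)]dotpDr /w dotpDl; lra.
Qed.

Lemma frechet_subgrad_iterate k : frechet_subdiff F (x k.+1) (gf (x k.+1) - w k).
Proof.
split=> [|e e0]; first by rewrite F_iterateE.
have e2 : 0 < e / 2 by lra.
have [d1 d1_gt0 fd1] := f_grad (x k.+1) _ e2.
pose K := C * N%:R ^+ 3.
have K1 : 0 < K + 1 by rewrite ltr_pwDr ?mulr_ge0.
exists (Num.min d1 (e / 2 / (K + 1))); first by rewrite lt_min d1_gt0 !divr_gt0.
move=> y /andP[_]; rewrite lt_min ltr_pdivlMr // => /andP[yd1 yK].
case gy : (g y == +oo%E); first by rewrite /F (eqP gy) addey ?leey.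
have gy_fin : g y \is a fin_num by rewrite fin_numE g_proper.1 gy.
have q_small : `|qnorm (Tk k) (y - x k.+1)| <= e / 2 * enorm (y - x k.+1).
  apply: le_trans (qnorm_le_enorm _ (Tk_bounded k) C_ge0) _.
  have := enorm_ge0 (y - x k.+1); rewrite expr2 -/K; nra.
have := g_model_bound k y gy_fin; have := fd1 y yd1; move: q_small.
rewrite F_iterateE /F -(fineK gy_fin) -!EFinD lee_fin /Fx dotpDl dotpNl !ler_norml.
lra.
Qed.

Section LimitPoint.
Variables (xbar : 'cV[R]_N) (phi : nat -> nat).
Hypothesis phi_incr : forall n, (phi n < phi n.+1)%N.
Hypothesis x_sub_cvg : seq_cvg (fun n => x (phi n).+1) xbar.

Let phi_ge := increasing_ge_id phi phi_incr.

Lemma z_sub_cvg : seq_cvg (fun n => z (phi n)) xbar.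
Proof.
have := seq_cvgB x_sub_cvg (seq_cvg_subseq phi phi_ge step_cvg0); rewrite subr0.
by apply: eq_seq_cvg => n; rewrite subKr.
Qed.

Lemma w_sub_cvg : seq_cvg (fun n => w (phi n)) (gf xbar).
Proof.
rewrite -[gf xbar]addr0; apply: seq_cvgD (vcontinuous_seq_cvg gf_cont z_sub_cvg) _.
exact: seq_cvg_mulmx0 (fun n => Tk_bounded (phi n)) (seq_cvg_subseq phi phi_ge step_cvg0).
Qed.

Lemma g_limit_fin : g xbar \is a fin_num.
Proof.
rewrite fin_numE g_proper.1 /=; apply/eqP => gxbar.
have /g_lsc[r r_gt0 g_gt] : ((Fx 0 - f xbar + 1)%:E < g xbar)%E.
  by rewrite gxbar ltey.
have [n1 xn1] := x_sub_cvg r r_gt0.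
have [n2 fn2] := is_gradient_seq_cvg f_grad x_sub_cvg 1 ltr01.
pose n := maxn n1 n2.
have := g_gt _ (xn1 n (leq_maxl _ _)).
rewrite -(fineK (g_iterate_fin (phi n))) lte_fin.
have := fn2 n (leq_maxr _ _); have := Fx_nonincreasing (leq0n (phi n)).
by rewrite /Fx ltr_norml; lra.
Qed.

Lemma g_sub_cvg : null_seq (fun n => fine (g (x (phi n).+1)) - fine (g xbar)).
Proof.
have xbar_sub : seq_cvg (fun n => xbar - x (phi n).+1) 0.
  by have := seq_cvgB (seq_cvg_cst xbar) x_sub_cvg; rewrite subrr.
pose U n := dotp (w (phi n)) (xbar - x (phi n).+1) +
  2^-1 * qnorm (Tk (phi n)) (xbar - x (phi n).+1).
apply: (@null_seq_squeeze _ _ U).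
- move=> e e0; have /g_lsc[r r_gt0 g_gt] : ((fine (g xbar) - e)%:E < g xbar)%E.
    by rewrite -[X in (_ < X)%E](fineK g_limit_fin) lte_fin; lra.
  have [n xn] := x_sub_cvg r r_gt0; exists n => k /xn /g_gt.
  by rewrite -(fineK (g_iterate_fin (phi k))) lte_fin; lra.
- by move=> n; have := g_model_bound (phi n) xbar g_limit_fin; rewrite /U; lra.
- apply: null_seqD (dotp_null w_sub_cvg xbar_sub) _.
  exact: null_seqMl (qnorm_null (fun n => Tk_bounded (phi n)) xbar_sub).
Qed.

Lemma limit_point_stationary : stationary F xbar.
Proof.
have F_fin : F xbar \is a fin_num by rewrite fin_numD g_limit_fin.
split=> //; split=> //.
exists (fun n => x (phi n).+1), (fun n => gf (x (phi n).+1) - w (phi n)); split=> //.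
- move=> e /(null_seqD (is_gradient_seq_cvg f_grad x_sub_cvg) g_sub_cvg)[n Fn].
  exists n => k /Fn; split; first by rewrite F_iterateE.
  by rewrite F_iterateE /F -(fineK g_limit_fin) -EFinD /= /Fx opprD addrACA.
- by move=> n; apply: frechet_subgrad_iterate.
- by have := seq_cvgB (vcontinuous_seq_cvg gf_cont x_sub_cvg) w_sub_cvg; rewrite subrr.
Qed.

End LimitPoint.

End ProxGradient.

Theorem mainTheorem3 (R : realType) (N M : nat)
  (f : 'cV[R]_N -> R) (gf : 'cV[R]_N -> 'cV[R]_N) (g : 'cV[R]_N -> \bar R)
  (L S : 'M[R]_N) (a : R)
  (x : nat -> 'cV[R]_N) (beta : nat -> 'cV[R]_M) (D : nat -> 'M[R]_(N, M))
  (Lk Tk : nat -> 'M[R]_N) :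
  proper_fun g -> lsc g ->
  is_gradient f gf -> vcontinuous gf ->
  pd L ->
  (* S = L^{1/2}, the positive definite square root of L, so invmx S = L^{-1/2} *)
  pd S -> S *m S = L ->
  (exists h : 'cV[R]_N -> 'cV[R]_N,
      is_gradient (fun z => f (invmx S *m z)) h /\
      (forall z w, enorm (h z - h w) <= enorm (z - w))) ->
  (exists m : R, forall y, (m%:E <= (f y)%:E + g y)%E) ->
  0 < a ->
  (forall k, sym_mx (Lk k) /\ sym_mx (Tk k)) ->
  (forall k, let Phi := fun (y : 'cV[R]_N) (b : 'cV[R]_M) =>
                let z := x k + D k *m b in
                (g y + (f z + dotp (gf z) (y - z) + 2^-1 * qnorm (Tk k) (y - z))%:E)%E in
     forall y b, (Phi (x k.+1) (beta k) <= Phi y b)%E) ->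
  (forall k, psd (Tk k - Lk k - a%:M)) ->
  (forall k, let z := x k + D k *m beta k in
     f (x k.+1) <= f z + dotp (gf z) (x k.+1 - z) + 2^-1 * qnorm (Lk k) (x k.+1 - z)) ->
  (exists C : R, forall k i j, `|Tk k i j| <= C) ->
  (forall k, ((f (x k.+1))%:E + g (x k.+1) <= (f (x k))%:E + g (x k))%E) /\
  (forall xbar, limit_point (fun k => x k.+1) xbar ->
     stationary (fun y => ((f y)%:E + g y)%E) xbar).
Proof.
move=> g_proper g_lsc f_grad gf_cont _ _ _ _ [m F_ge] a_gt0 LT_sym x_beta_min
  Tk_Lk_psd f_descent [C Tk_le].
pose z k := x k + D k *m beta k.
have x_min k y : (prox_model f gf g (Tk k) (z k) (x k.+1) <=
    prox_model f gf g (Tk k) (z k) y)%E := x_beta_min k y (beta k).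
have x_le_center k : (prox_model f gf g (Tk k) (z k) (x k.+1) <=
    prox_model f gf g (Tk k) (x k) (x k))%E.
  by have := x_beta_min k (x k) 0; rewrite /= mulmx0 addr0.
have Tk_bounded k i j : `|Tk k i j| <= `|C| := le_trans (Tk_le k i j) (ler_norm C).
split=> [|xbar [phi [phi_incr x_sub_cvg]]].
  exact: F_nonincreasing a_gt0 x_le_center Tk_Lk_psd f_descent.
exact: limit_point_stationary g_proper g_lsc f_grad gf_cont F_ge a_gt0
  (fun k => (LT_sym k).2) Tk_bounded (normr_ge0 C) x_min x_le_center Tk_Lk_psd
  f_descent xbar phi phi_incr x_sub_cvg.
Qed.
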